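(* Let $0\neq h\in\mathbb{F}[x]$, regard $A_h\subseteq A_1$ via $x\mapsto x$, $\hat y\mapsto yh$, and let $C_{A_h}(x)=\{a\in A_h: ax=xa\}$. (i) If $\mathrm{char}(\mathbb{F})=0$, then $C_{A_h}(x)=\mathbb{F}[x]$. (ii) If $\mathrm{char}(\mathbb{F})=p>0$, then: (a) $C_{A_h}(x)=\mathbb{F}[x,h^py^p]=\bigoplus_{i\equiv 0 \bmod p}\mathbb{F}[x]\,h^iy^i$; (b) $[x,A_h]=\bigoplus_{i\not\equiv -1\bmod p}h\,\mathbb{F}[x]\,h^iy^i=\bigoplus_{i=0}^{p-2}h\,C_{A_h}(x)\,h^iy^i$; (c) $[\hat y,A_h]=\bigoplus_{i\ge0}\mathrm{im}\!\left(\tfrac{d}{dx}\right)h\,\hat y^i=\bigoplus_{j\not\equiv -1\bmod p}h x^j\,\mathbb{F}[\hat y]$, where $\mathrm{im}(\tfrac{d}{dx})\subseteq\mathbb{F}[x]$ is the image of formal differentiation.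
   Context: For $h\in\mathbb{F}[x]$, $A_h$ is the unital associative $\mathbb{F}$-algebra generated by $x,\hat y$ with defining relation $\hat yx-x\hat y=h$. $A_1$ is the Weyl algebra, generated by $x,y$ with $yx-xy=1$; for $h\ne0$, $x\mapsto x,\ \hat y\mapsto yh$ embeds $A_h$ into $A_1$. For $b\in A_h$, $[b,A_h]=\{ba-ab:a\in A_h\}$. *)

From HB Require Import structures.
From mathcomp Require Import all_boot all_order all_algebra.
Set Implicit Arguments. Unset Strict Implicit. Unset Printing Implicit Defensive.
Import Order.TTheory GRing.Theory Num.Theory.
Local Open Scope ring_scope.

(* The Weyl algebra A_1 over a field F, represented by normal forms:
   an element sum_i f_i(x) y^i (f_i in F[x]) is the polynomial in an outer
   variable (standing for y) with coefficients f_i : {poly F}.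
   'X : {poly {poly F}} is y;  f%:P is the element f(x) of F[x] ⊆ A_1. *)
Notation weyl F := {poly {poly F}}.

(* Normal-ordered product, from  y^i g = sum_k C(i,k) g^(k) y^(i-k):
   (f y^i)(g y^j) = sum_{k<=i} C(i,k) f g^(k) y^(i+j-k). *)
Definition wmul (F : fieldType) (a b : weyl F) : weyl F :=
  \sum_(i < size a) \sum_(j < size b) \sum_(k < i.+1)
     ('C(i, k)%:R * a`_i * (b`_j)^`(k)) *: 'X^(i + j - k).

Definition wone (F : fieldType) : weyl F := 1.
Definition wexp (F : fieldType) (a : weyl F) (n : nat) : weyl F :=
  iter n (wmul a) (wone F).

Definition wx (F : fieldType) : weyl F := ('X : {poly F})%:P.
Definition wy (F : fieldType) : weyl F := 'X.
Definition yhat (F : fieldType) (h : {poly F}) : weyl F := wmul (wy F) h%:P.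

Inductive subalg_gen (F : fieldType) (S : weyl F -> Prop) : weyl F -> Prop :=
| sg_gen a : S a -> subalg_gen S a
| sg_const c : subalg_gen S (c%:P%:P)
| sg_add a b : subalg_gen S a -> subalg_gen S b -> subalg_gen S (a + b)
| sg_mul a b : subalg_gen S a -> subalg_gen S b -> subalg_gen S (wmul a b).

Definition in_Ah (F : fieldType) (h : {poly F}) : weyl F -> Prop :=
  subalg_gen (fun a => a = wx F \/ a = yhat h).

Definition in_CAhx (F : fieldType) (h : {poly F}) (a : weyl F) : Prop :=
  in_Ah h a /\ wmul a (wx F) = wmul (wx F) a.

Definition in_comm (F : fieldType) (h : {poly F}) (b c : weyl F) : Prop :=
  exists a, in_Ah h a /\ c = wmul b a - wmul a b.

From HB Require Import structures.
From mathcomp Require Import all_boot all_order all_algebra.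
From mathcomp Require Import ring zify.
Import Order.TTheory GRing.Theory Num.Theory.
Local Open Scope ring_scope.
Set Implicit Arguments. Unset Strict Implicit. Unset Printing Implicit Defensive.

(* Left multiplication by y acts as b |-> 'X * b + d b / dx
     (ymul); hence the product is a b = sum_i a_i (y^i b), which gives
     bilinearity, associativity and the key identity a x = x a + d a / dy.
   - The image of A_h is the set of normal forms with h^i | a_i (h_graded):
     this set is a subalgebra containing x and yhat = h y + h', and conversely
     the powers yhat^n (degree n, leading coefficient h^n) triangularly span it.
   - Hence C_{A_h}(x) = {a h-graded | d a / dy = 0} and [x, A_h] = d A_h / dy.
     In characteristic 0 the kernel of d/dy is F[x]  (part (i)); in
     characteristic p it consists of the p-sparse normal forms, y^p is central,
     and the descriptions (ii)(a), (ii)(b) follow by coefficient bookkeeping.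
   - yhat commutes with its powers and [yhat, f] = h f', so
     [yhat, sum_i f_i yhat^i] = sum_i h f_i' yhat^i, giving (ii)(c) once the
     image of d/dx in characteristic p is identified. *)

Section NormalForms.
Variable F : fieldType.
Implicit Types (a b c : weyl F) (f g : {poly F}).

Definition xderiv b : weyl F := map_poly deriv b.

Lemma coef_xderiv b m : (xderiv b)`_m = (b`_m)^`().
Proof. exact: coef_map. Qed.

Lemma size_xderiv b : (size (xderiv b) <= size b)%N.
Proof. by apply/leq_sizeP=> m lebm; rewrite coef_xderiv nth_default ?deriv0. Qed.

(* Left multiplication by y on normal forms: y * b = 'X * b + xderiv b,
   since y f = f y + f' in A_1. *)
Definition ymul b : weyl F := 'X * b + xderiv b.

Fact ymul_is_nmod_morphism : nmod_morphism ymul.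
Proof.
split=> [|b c]; first by rewrite /ymul /xderiv raddf0 mulr0 addr0.
by rewrite /ymul /xderiv raddfD mulrDr addrACA.
Qed.
HB.instance Definition _ :=
  GRing.isNmodMorphism.Build (weyl F) (weyl F) ymul ymul_is_nmod_morphism.

Definition ymuln n b : weyl F := iter n ymul b.

Fact ymuln_is_nmod_morphism n : nmod_morphism (ymuln n).
Proof.
split=> [|b c]; elim: n => //= n IH; first by rewrite IH raddf0.
by rewrite IH raddfD.
Qed.
HB.instance Definition _ n :=
  GRing.isNmodMorphism.Build (weyl F) (weyl F) (ymuln n)
    (ymuln_is_nmod_morphism n).

Lemma ymulZ f b : ymul (f *: b) = f *: ymul b + f^`() *: b.
Proof.
apply/polyP=> m; rewrite /ymul !(coefD, coefZ, coef_xderiv, coefXM, derivM).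
by case: eqP => _; ring.
Qed.

Lemma ymul_Xn n : ymul ('X^n : weyl F) = 'X^(n.+1).
Proof.
rewrite /ymul exprS; have -> : xderiv ('X^n : weyl F) = 0.
  by apply/polyP=> m; rewrite coef_xderiv coef0 coefXn; case: eqP; rewrite derivC.
by rewrite addr0.
Qed.

Lemma ymuln_Xn i j : ymuln i ('X^j : weyl F) = 'X^(i + j).
Proof. by elim: i => //= i IH; rewrite IH ymul_Xn. Qed.

Lemma ymuln_mono i g j : ymuln i (g *: 'X^j) =
  \sum_(k < i.+1) (g^`(k) *+ 'C(i, k)) *: 'X^(j + (i - k)).
Proof.
elim: i => [|i IH]; first by rewrite big_ord_recl big_ord0 addr0 /= mulr1n addn0.
rewrite /= -/(ymuln i _) IH raddf_sum /=.
under eq_bigr => k _ do rewrite ymulZ ymul_Xn derivMn -derivnS.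
rewrite big_split /= [in RHS]big_ord_recl /= subn0 bin0 mulr1n.
under [in RHS]eq_bigr => k _ do rewrite /= subSS binS mulrnDr scalerDl.
rewrite big_split /= addrA; congr (_ + _).
rewrite big_ord_recl /= subn0 bin0 mulr1n addnS; congr (_ + _).
rewrite big_ord_recr /= bin_small // mulr0n scale0r addr0.
by apply: eq_bigr => k _ /=; rewrite -addnS subnSK.
Qed.

Lemma poly_expand b : b = \sum_(j < size b) b`_j *: 'X^j.
Proof. by rewrite -poly_def coefK. Qed.

Lemma wmulE a b : wmul a b = \sum_(i < size a) a`_i *: ymuln i b.
Proof.
rewrite /wmul; apply: eq_bigr => i _.
have -> : ymuln i b = \sum_(j < size b) ymuln i (b`_j *: 'X^j).
  by rewrite -raddf_sum -poly_expand.
rewrite scaler_sumr; apply: eq_bigr => j _.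
rewrite ymuln_mono scaler_sumr; apply: eq_bigr => k _.
rewrite scalerA addnC -addnBA; last by rewrite -ltnS.
by congr (_ *: _); rewrite -mulr_natl; ring.
Qed.

Lemma wmulEN N a b : (size a <= N)%N ->
  wmul a b = \sum_(i < N) a`_i *: ymuln i b.
Proof.
move=> leaN; rewrite wmulE (big_ord_widen N (fun i => a`_i *: ymuln i b) leaN).
rewrite big_mkcond /=; apply: eq_bigr => i _.
by case: ltnP => // /(nth_default 0) ->; rewrite scale0r.
Qed.

Fact wmul_is_nmod_morphism a : nmod_morphism (wmul a).
Proof.
split=> [|b c]; rewrite !wmulE; first by rewrite big1 // => i _; rewrite raddf0 scaler0.
by rewrite -big_split; apply: eq_bigr => i _; rewrite raddfD scalerDr.
Qed.
HB.instance Definition _ a :=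
  GRing.isNmodMorphism.Build (weyl F) (weyl F) (wmul a) (wmul_is_nmod_morphism a).

Lemma wmulDl a1 a2 b : wmul (a1 + a2) b = wmul a1 b + wmul a2 b.
Proof.
have le1 : (size a1 <= size a1 + size a2)%N by rewrite leq_addr.
have le2 : (size a2 <= size a1 + size a2)%N by rewrite leq_addl.
have le12 : (size (a1 + a2)%R <= size a1 + size a2)%N.
  by apply: leq_trans (size_polyD _ _) _; rewrite geq_max le1 le2.
rewrite !(wmulEN _ le12) (wmulEN _ le1) (wmulEN _ le2) -big_split /=.
by apply: eq_bigr => i _; rewrite coefD scalerDl.
Qed.

Lemma wmulZl f a b : wmul (f *: a) b = f *: wmul a b.
Proof.
rewrite (wmulEN _ (size_scale_leq f a)) wmulE scaler_sumr.
by apply: eq_bigr => i _; rewrite coefZ scalerA.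
Qed.

Lemma wmulNl a b : wmul (- a) b = - wmul a b.
Proof. by rewrite -scaleN1r wmulZl scaleN1r. Qed.

Lemma wmulBl a1 a2 b : wmul (a1 - a2) b = wmul a1 b - wmul a2 b.
Proof. by rewrite wmulDl wmulNl. Qed.

Lemma wmul0l b : wmul 0 b = 0.
Proof. by rewrite wmulE size_poly0 big_ord0. Qed.

Lemma wmul_suml I (r : seq I) (P : pred I) (G : I -> weyl F) b :
  wmul (\sum_(i <- r | P i) G i) b = \sum_(i <- r | P i) wmul (G i) b.
Proof. exact: (big_morph (fun a => wmul a b) (fun x y => wmulDl x y b) (wmul0l b)). Qed.

Lemma wmul_mono f n b : wmul (f *: 'X^n) b = f *: ymuln n b.
Proof.
have le_n1 : (size (f *: 'X^n : weyl F) <= n.+1)%N.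
  by apply: leq_trans (size_scale_leq _ _) _; rewrite size_polyXn.
rewrite (wmulEN _ le_n1) big_ord_recr /= coefZ coefXn eqxx mulr1 big1 ?add0r //.
by move=> i _; rewrite coefZ coefXn (ltn_eqF (ltn_ord i)) mulr0 scale0r.
Qed.

Lemma wmulCl f b : wmul f%:P b = f *: b.
Proof. by rewrite -[f%:P]mulr1 mul_polyC -(expr0 ('X : weyl F)) wmul_mono. Qed.

Lemma wmul1l b : wmul 1 b = b.
Proof. by rewrite -polyC1 wmulCl scale1r. Qed.

Lemma wmul_Xnr c i : wmul c 'X^i = c * 'X^i.
Proof.
rewrite wmulE [in RHS](poly_expand c) mulr_suml; apply: eq_bigr => j _.
by rewrite ymuln_Xn exprD scalerAl.
Qed.

Lemma wmul1r a : wmul a 1 = a.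
Proof. by rewrite -(expr0 'X) wmul_Xnr mulr1. Qed.

Lemma wmul_ymul a c : wmul (ymul a) c = ymul (wmul a c).
Proof.
rewrite [ymul a]/ymul wmulDl.
have -> : 'X * a = \sum_(i < size a) a`_i *: 'X^(i.+1).
  by rewrite {1}(poly_expand a) mulr_sumr; apply: eq_bigr => i _; rewrite -scalerAr exprS.
rewrite wmul_suml (wmulEN _ (size_xderiv a)) [in RHS]wmulE raddf_sum -big_split /=.
by apply: eq_bigr => i _; rewrite wmul_mono ymulZ coef_xderiv.
Qed.

Lemma wmulA a b c : wmul (wmul a b) c = wmul a (wmul b c).
Proof.
have wmul_ymuln n d : wmul (ymuln n d) c = ymuln n (wmul d c).
  by elim: n => //= n IH; rewrite wmul_ymul IH.
rewrite [wmul a b]wmulE wmul_suml [in RHS]wmulE; apply: eq_bigr => i _.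
by rewrite wmulZl wmul_ymuln.
Qed.

Lemma wmul_x a : wmul a (wx F) = wmul (wx F) a + a^`().
Proof.
have ymuln_x i : ymuln i (wx F) = 'X *: 'X^i + ('X^i)^`().
  elim: i => [|i IH]; first by rewrite /= derivC addr0 -mul_polyC mulr1.
  rewrite /= -/(ymuln i _) IH raddfD /= ymulZ ymul_Xn derivX scale1r.
  case: i {IH} => [|n]; first by rewrite !derivXn /= mulr0n raddf0 addr0 mulr1n.
  rewrite !derivXn /= -scaler_nat ymulZ ymul_Xn derivMn derivC mul0rn scale0r.
  by rewrite addr0 scaler_nat -addrA -mulrS.
rewrite /wx wmulCl wmulE.
transitivity ('X *: \sum_(j < size a) a`_j *: 'X^j + (\sum_(j < size a) a`_j *: 'X^j)^`());
  last by rewrite -poly_expand.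
rewrite (raddf_sum (@deriv _)) scaler_sumr -big_split /=.
by apply: eq_bigr => i _; rewrite ymuln_x scalerDr derivZ !scalerA mulrC.
Qed.

End NormalForms.

Section ImageOfAh.
Variables (F : fieldType) (h : {poly F}).
Implicit Types (a b c : weyl F) (f g : {poly F}).

Definition h_graded a := forall i, h ^+ i %| a`_i.

(* Left multiplication by y^s turns h_graded into "h^(m-s) divides the
   m-th coefficient". *)
Definition h_graded_shift s b := forall m, h ^+ (m - s) %| b`_m.

Lemma dvdp_deriv_exp n g : h ^+ n %| g -> h ^+ n.-1 %| g^`().
Proof.
case: n => [_|n /dvdpP[q ->]] /=; first by rewrite expr0 dvd1p.
rewrite derivM deriv_exp; apply: dvdp_add; first exact/dvdp_mull/dvdp_exp2l.
by rewrite -mulr_natl mulrA; apply: dvdp_mull; exact: dvdp_mull (dvdpp _).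
Qed.

Lemma h_graded_ymuln i b : h_graded b -> h_graded_shift i (ymuln i b).
Proof.
move=> hb; elim: i => [|i IH] m; first by rewrite subn0.
rewrite /= /ymul coefD coefXM coef_xderiv; apply: dvdp_add.
  by case: m => [|m] /=; [exact: dvdp0 | rewrite subSS].
by rewrite subnS; apply: dvdp_deriv_exp.
Qed.

Lemma h_graded0 : h_graded 0.
Proof. by move=> i; rewrite coef0 dvdp0. Qed.

Lemma h_gradedD a b : h_graded a -> h_graded b -> h_graded (a + b).
Proof. by move=> ha hb i; rewrite coefD dvdp_add. Qed.

Lemma h_gradedZ f a : h_graded a -> h_graded (f *: a).
Proof. by move=> ha i; rewrite coefZ dvdp_mull. Qed.

Lemma h_gradedB a b : h_graded a -> h_graded b -> h_graded (a - b).
Proof. by move=> ha hb; rewrite -scaleN1r; apply/h_gradedD/h_gradedZ. Qed.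

Lemma h_graded_sum I (r : seq I) (P : pred I) (G : I -> weyl F) :
  (forall i, P i -> h_graded (G i)) -> h_graded (\sum_(i <- r | P i) G i).
Proof. by move=> hG; apply: big_ind => //; [exact: h_graded0 | exact: h_gradedD]. Qed.

Lemma h_gradedC f : h_graded f%:P.
Proof. by case=> [|i]; rewrite coefC /= ?dvd1p ?dvdp0. Qed.

(* Divisibility adds up along the product, so h_graded is multiplicative. *)
Lemma h_graded_wmul a b : h_graded a -> h_graded b -> h_graded (wmul a b).
Proof.
move=> ha hb; rewrite wmulE; apply: h_graded_sum => i _ m; rewrite coefZ.
have le_m : (m <= i + (m - i))%N by rewrite -leq_subLR.
apply: dvdp_trans (dvdp_exp2l h le_m) _; rewrite exprD.
by apply: dvdp_mul => //; apply: h_graded_ymuln.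
Qed.

Lemma yhatE : yhat h = h *: 'X + (h^`())%:P.
Proof.
rewrite /yhat /wy -[X in wmul X](scale1r _) -[X in _ *: X]expr1 wmul_mono scale1r.
by rewrite /= /ymul /xderiv map_polyC /= mulrC mul_polyC.
Qed.

Lemma h_graded_yhat : h_graded (yhat h).
Proof.
rewrite yhatE; apply: h_gradedD; last exact: h_gradedC.
by case=> [|[|i]]; rewrite coefZ coefX /= ?mulr0 ?dvdp0 // mulr1 expr1.
Qed.

Lemma Ah_h_graded a : in_Ah h a -> h_graded a.
Proof.
elim=> [_ [->|->] | c | | ]; first exact: h_gradedC.
- exact: h_graded_yhat.
- exact: h_gradedC.
- by move=> ? ? _ ? _ ?; exact: h_gradedD.
- by move=> ? ? _ ? _ ?; exact: h_graded_wmul.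
Qed.

Local Notation ypow n := (wexp (yhat h) n).

Lemma ypowS n : ypow n.+1 = wmul (yhat h) (ypow n).
Proof. by []. Qed.

Lemma wmul_yhat b : wmul (yhat h) b = h *: ymul b + h^`() *: b.
Proof. by rewrite yhatE wmulDl -[X in h *: X]expr1 wmul_mono wmulCl. Qed.

Lemma ypow_lead n : (size (ypow n) <= n.+1)%N /\ (ypow n)`_n = h ^+ n.
Proof.
elim: n => [|n [le_sz lead]]; first by rewrite /wone size_poly1 coefC expr0.
have coef_hi j : (n.+1 <= j)%N -> (ypow n)`_j = 0 by apply/leq_sizeP.
have coef_yS m : (ypow n.+1)`_m =
    h * ((if m == 0%N then 0 else (ypow n)`_m.-1) + ((ypow n)`_m)^`())
    + h^`() * (ypow n)`_m.
  by rewrite ypowS wmul_yhat !(coefD, coefZ, coefXM, coef_xderiv).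
split; last by rewrite coef_yS /= lead coef_hi // deriv0 !(addr0, mulr0) exprS.
apply/leq_sizeP=> [[|j]] // ltj; rewrite coef_yS /= !coef_hi ?(ltnW ltj) //.
by rewrite deriv0 !(addr0, mulr0).
Qed.

Lemma polyC_subalg_gen (S : weyl F -> Prop) f : S (wx F) -> subalg_gen S f%:P.
Proof.
move=> Sx; elim/poly_ind: f => [|f c IH]; first by rewrite -polyC0; apply: sg_const.
rewrite polyCD; apply: sg_add; last exact: sg_const.
have -> : (f * 'X)%:P = wmul f%:P (wx F) by rewrite wmulCl -mul_polyC polyCM.
by apply: sg_mul => //; apply: sg_gen.
Qed.

Lemma Ah_ypow n : in_Ah h (ypow n).
Proof.
elim: n => [|n IH]; first by rewrite /wexp /= /wone -!polyC1; apply: sg_const.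
by rewrite ypowS; apply: sg_mul => //; apply: sg_gen; right.
Qed.

Lemma Ah_span (f : nat -> {poly F}) n : in_Ah h (\sum_(i < n) f i *: ypow i).
Proof.
apply: big_ind => [|? ? |i _]; first by rewrite -!polyC0; apply: sg_const.
  exact: sg_add.
by rewrite -wmulCl; apply: sg_mul; [apply: polyC_subalg_gen; left | exact: Ah_ypow].
Qed.

Lemma h_graded_ypow_span N a : (size a <= N)%N -> h_graded a ->
  exists f : nat -> {poly F}, a = \sum_(i < N) f i *: ypow i.
Proof.
elim: N a => [|N IH] a le_aN ha.
  by exists (fun=> 0); move: le_aN; rewrite leqn0 size_poly_eq0 big_ord0 => /eqP.
have [le_yN lead] := ypow_lead N.
pose g := a`_N %/ h ^+ N.
set r := a - g *: ypow N.
have le_rN : (size r <= N)%N.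
  apply/leq_sizeP=> j le_Nj; rewrite coefB coefZ.
  case: (ltngtP j N) => [|ltNj|->]; first by rewrite ltnNge le_Nj.
    by rewrite !nth_default ?mulr0 ?subr0 // (leq_trans le_yN, leq_trans le_aN).
  by rewrite lead divpK ?subrr.
have hr : h_graded r by apply/h_gradedB/h_gradedZ/Ah_h_graded/Ah_ypow.
have [f def_r] := IH r le_rN hr.
exists (fun i => if i == N then g else f i).
rewrite big_ord_recr /= eqxx -[a](subrK (g *: ypow N)) -/r def_r; congr (_ + _).
by apply: eq_bigr => i _; rewrite (ltn_eqF (ltn_ord i)).
Qed.

Lemma Ah_iff a : in_Ah h a <-> h_graded a.
Proof.
split; first exact: Ah_h_graded.
by move=> /(h_graded_ypow_span (leqnn _)) [f ->]; exact: Ah_span.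
Qed.

End ImageOfAh.

Section ZeroDerivative.
Variable R : idomainType.
Implicit Type q : {poly R}.

Lemma deriv_eq0_char0 q : [pchar R] =i pred0 -> q^`() = 0 -> q = (q`_0)%:P.
Proof.
move=> char0 dq0; apply/polyP=> [[|m]]; rewrite coefC //=.
have /eqP := congr1 (fun r : {poly R} => r`_m) dq0.
by rewrite coef_deriv coef0 -mulr_natr mulf_eq0 (proj1 (pcharf0P R) char0) orbF => /eqP.
Qed.

Variable p : nat.
Hypothesis charRp : p \in [pchar R].

Lemma mulrn_pchar_dvd (x : R) n : (p %| n)%N -> x *+ n = 0.
Proof. by case/dvdnP=> k ->; rewrite mulrnA (mulrn_pchar charRp). Qed.

Lemma deriv_eq0_pchar q : q^`() = 0 <-> (forall j, ~~ (p %| j)%N -> q`_j = 0).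
Proof.
split=> [dq0 j pNj|qp].
  case: j pNj => [|j] pNj; first by rewrite dvdn0 in pNj.
  have /eqP := congr1 (fun r : {poly R} => r`_j) dq0.
  rewrite coef_deriv coef0 -mulr_natr mulf_eq0 -(dvdn_pcharf charRp).
  by rewrite (negbTE pNj) orbF => /eqP.
apply/polyP=> j; rewrite coef_deriv coef0.
by have [/mulrn_pchar_dvd -> // | /qp ->] := boolP (p %| j.+1)%N; rewrite mul0rn.
Qed.

Lemma derivn_pchar q : q^`(p) = 0.
Proof.
apply/polyP=> i; rewrite coef_derivn coef0 mulrn_pchar_dvd // -bin_ffact.
by apply/dvdn_mull/dvdn_fact; rewrite prime_gt0 ?(pcharf_prime charRp) /=.
Qed.

End ZeroDerivative.

Section Centralizer.
Variables (F : fieldType) (h : {poly F}).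
Implicit Types (a b : weyl F) (f : {poly F}).

(* By [a, x] = d a / d y, the centralizer of x is the kernel of d / d y. *)
Lemma CAhx_iff a : in_CAhx h a <-> h_graded h a /\ a^`() = 0.
Proof.
rewrite /in_CAhx Ah_iff wmul_x; split=> -[ha dxa]; split=> //.
  by apply: (addrI (wmul (wx F) a)); rewrite addr0.
by rewrite dxa addr0.
Qed.

Lemma CAhx_polyC f : in_CAhx h f%:P.
Proof. by apply/CAhx_iff; split; [exact: h_gradedC | exact: derivC]. Qed.

Lemma CAhx_add a b : in_CAhx h a -> in_CAhx h b -> in_CAhx h (a + b).
Proof. by move=> [Aa ca] [Ab cb]; split; [exact: sg_add | rewrite wmulDl raddfD ca cb]. Qed.

Lemma CAhx_wmul a b : in_CAhx h a -> in_CAhx h b -> in_CAhx h (wmul a b).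
Proof.
by move=> [Aa ca] [Ab cb]; split; [exact: sg_mul | rewrite wmulA cb -wmulA ca wmulA].
Qed.

Lemma comm_x_iff b : in_comm h (wx F) b <-> exists a, h_graded h a /\ b = - a^`().
Proof.
have commE a : wmul (wx F) a - wmul a (wx F) = - a^`().
  by rewrite wmul_x opprD addrA subrr add0r.
by split=> -[a [ha ->]]; exists a; rewrite commE; split=> //; apply/Ah_iff.
Qed.

Lemma CAhx_char0 : [pchar F] =i pred0 ->
  forall a, in_CAhx h a <-> exists f, a = f%:P.
Proof.
move=> char0 a; split=> [/CAhx_iff[_ da0] | [f ->]]; last exact: CAhx_polyC.
have char0_polyF : [pchar {poly F}] =i pred0 by move=> n; rewrite pchar_poly.
by exists a`_0; exact: deriv_eq0_char0.
Qed.

End Centralizer.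

Section CommutatorWithYhat.
Variables (F : fieldType) (h : {poly F}).
Implicit Types (a b : weyl F) (f : {poly F}).
Local Notation yh := (yhat h).
Local Notation ypow n := (wexp yh n).

Lemma wmul_ypow_yhat n : wmul (ypow n) yh = ypow n.+1.
Proof.
elim: n => [|n IH]; first by rewrite /wexp /= /wone wmul1l wmul1r.
by rewrite [ypow n.+1]/= wmulA IH.
Qed.

Lemma comm_yhat_polyC f : wmul yh f%:P - wmul f%:P yh = (h * f^`())%:P.
Proof.
rewrite wmul_yhat wmulCl yhatE /ymul /xderiv map_polyC /=.
apply/polyP=> j; rewrite !(coefB, coefD, coefN, coefZ, coefC, coefXM, coefX).
by case: j => [|[|j]] /=; ring.
Qed.

(* Since yhat commutes with its powers,
   [yhat, sum_i f_i yhat^i] = sum_i h f_i' yhat^i. *)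
Lemma comm_yhat_span n (f : nat -> {poly F}) :
  wmul yh (\sum_(i < n) f i *: ypow i) - wmul (\sum_(i < n) f i *: ypow i) yh =
  \sum_(i < n) (h * (f i)^`()) *: ypow i.
Proof.
rewrite raddf_sum wmul_suml -sumrB; apply: eq_bigr => i _ /=.
rewrite -!wmulCl -wmulA [wmul (wmul _ (ypow i)) yh]wmulA wmul_ypow_yhat [ypow i.+1]/=.
by rewrite -wmulA -wmulBl comm_yhat_polyC.
Qed.

Lemma comm_yhat_iff_sum b : in_comm h yh b <->
  exists n (g : nat -> {poly F}), b = \sum_(i < n) wmul (((g i)^`() * h)%:P) (ypow i).
Proof.
have termE (g : nat -> {poly F}) i :
    wmul (((g i)^`() * h)%:P) (ypow i) = (h * (g i)^`()) *: ypow i.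
  by rewrite wmulCl mulrC.
split=> [[a [/Ah_iff ha ->]] | [n [g ->]]].
  have [f ->] := h_graded_ypow_span (leqnn _) ha.
  by exists (size a), f; rewrite comm_yhat_span; apply: eq_bigr => i _; rewrite termE.
exists (\sum_(i < n) g i *: ypow i); split; first exact: Ah_span.
by rewrite comm_yhat_span; apply: eq_bigr => i _; rewrite termE.
Qed.

End CommutatorWithYhat.

Lemma combination_iff (F : fieldType) (P : pred nat) (w : nat -> {poly F})
    (T : {poly F} -> nat -> {poly F}) (b : weyl F) :
  (forall g i, T g i = g * w i) ->
  (exists n (f : nat -> {poly F}), b = \sum_(i < n | P i) T (f i) i *: 'X^i) <->
  (forall m, (~~ P m -> b`_m = 0) /\ w m %| b`_m).
Proof.
move=> defT; split=> [[n [f ->]] m | bP].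
  rewrite coef_sum; apply: (big_ind (fun c => (~~ P m -> c = 0) /\ w m %| c)).
  - by split=> //; exact: dvdp0.
  - by move=> c d [c0 wc] [d0 wd]; split=> [Pm|]; [rewrite c0 ?d0 ?addr0 | exact: dvdp_add].
  move=> i Pi; rewrite coefZ coefXn defT.
  have [<-|_] := eqVneq (i : nat) m; last by rewrite mulr0; split=> //; exact: dvdp0.
  by rewrite mulr1 Pi; split=> //; exact: dvdp_mull (dvdpp _).
exists (size b), (fun i => b`_i %/ w i); rewrite {1}(poly_expand b) [RHS]big_mkcond.
apply: eq_bigr => i _; have [b0 wb] := bP i.
by case: (boolP (P i)) => Pi; rewrite ?defT ?divpK // b0 // scale0r.
Qed.

Section CharacteristicP.
Variables (F : fieldType) (h : {poly F}) (p : nat).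
Hypothesis charFp : p \in [pchar F].
Implicit Types (a b c : weyl F) (g : {poly F}).

Lemma pchar_polyF : p \in [pchar {poly F}].
Proof. by rewrite pchar_poly. Qed.

Lemma pchar_weyl : p \in [pchar weyl F].
Proof. by rewrite !pchar_poly. Qed.

Lemma prime_p : prime p.
Proof. exact: pcharf_prime charFp. Qed.

(* In characteristic p the Leibniz expansion of y^p collapses: y^p is
   central, and y^p b = b y^p is just the shift of b. *)
Lemma ymuln_p b : ymuln p b = 'X^p * b.
Proof.
have ymuln_p_mono g j : ymuln p (g *: 'X^j) = g *: 'X^(j + p).
  rewrite ymuln_mono big_ord_recl /= bin0 mulr1n subn0 big1 ?addr0 // => k _ /=.
  have [ltkp|eqkp] : (k.+1 < p)%N \/ k.+1 = p.
    by move: (ltn_ord k); rewrite leq_eqVlt => /orP[/eqP|]; [right | left].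
  - rewrite (mulrn_pchar_dvd pchar_polyF) ?scale0r //.
    by apply: prime_dvd_bin; rewrite ?prime_p ?ltkp.
  - by rewrite add0n -derivnS eqkp (derivn_pchar charFp) mul0rn scale0r.
rewrite [in LHS](poly_expand b) raddf_sum [in RHS](poly_expand b) mulr_sumr /=.
by apply: eq_bigr => j _; rewrite ymuln_p_mono -scalerAr -exprD addnC.
Qed.

Lemma ymuln_pchar_mul t b : ymuln (p * t) b = 'X^(p * t) * b.
Proof.
elim: t b => [|t IH] b; first by rewrite muln0 expr0 mul1r.
rewrite mulnS /ymuln iterD -/(ymuln (p * t) b) IH.
by rewrite -/(ymuln p _) ymuln_p mulrA -exprD.
Qed.

Definition p_sparse a := forall j, ~~ (p %| j)%N -> a`_j = 0.

Lemma CAhx_iff_sparse a : in_CAhx h a <-> h_graded h a /\ p_sparse a.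
Proof.
by rewrite CAhx_iff; split=> -[ha da]; split=> //; exact/(deriv_eq0_pchar pchar_polyF a).
Qed.

Lemma wmul_sparseC c g : p_sparse c -> wmul c g%:P = g *: c.
Proof.
move=> sc; rewrite wmulE [in RHS](poly_expand c) scaler_sumr; apply: eq_bigr => i _.
have [/dvdnP[t def_i]|pNi] := boolP (p %| i)%N; last by rewrite sc ?scale0r ?scaler0.
rewrite def_i mulnC ymuln_pchar_mul -[g%:P]mulr1 mul_polyC -scalerAr mulr1.
by rewrite !scalerA mulrC.
Qed.

Local Notation zgen := ((h ^+ p) *: 'X^p : weyl F).
Local Notation in_Fxz := (subalg_gen (fun b => b = wx F \/ b = zgen)).

Definition zpow t : weyl F := iter t (wmul zgen) (wone F).

Lemma zpowE t : zpow t = h ^+ (p * t) *: 'X^(p * t).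
Proof.
elim: t => [|t IH]; first by rewrite /zpow /= /wone muln0 !expr0 scale1r.
rewrite /zpow iterS -/(zpow t) IH wmul_mono ymuln_p -scalerAr scalerA -!exprD.
by rewrite mulnS.
Qed.

Lemma Fxz_zpow t : in_Fxz (zpow t).
Proof.
elim: t => [|t IH]; first by rewrite /zpow /= /wone -!polyC1; apply: sg_const.
by rewrite /zpow iterS; apply: sg_mul => //; apply: sg_gen; right.
Qed.

Lemma Fxz_CAhx a : in_Fxz a -> in_CAhx h a.
Proof.
elim=> [_ [->|->] | c | a1 a2 _ C1 _ C2 | a1 a2 _ C1 _ C2].
- exact: CAhx_polyC.
- apply/CAhx_iff; split; last by rewrite derivZ derivXn (mulrn_pchar pchar_weyl) scaler0.
  by move=> i; rewrite coefZ coefXn; case: eqP => [->|_]; rewrite ?mulr1 ?mulr0 ?dvdp0.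
- exact: CAhx_polyC.
- exact: CAhx_add.
- exact: CAhx_wmul.
Qed.

(* Conversely every element of the centralizer lies in F[x, h^p y^p]: peel
   off the top coefficient, which sits in a degree p t and is a multiple of
   h^(p t), by subtracting a multiple of zgen^t. *)
Lemma CAhx_Fxz_size N a : (size a <= N)%N -> h_graded h a -> p_sparse a -> in_Fxz a.
Proof.
elim: N a => [|N IH] a le_aN ha sa.
  by move: le_aN; rewrite leqn0 size_poly_eq0 => /eqP->; rewrite -!polyC0; apply: sg_const.
have a_hi j : (N.+1 <= j)%N -> a`_j = 0 by apply/leq_sizeP.
have [/dvdnP[t def_N] | pNN] := boolP (p %| N)%N; last first.
  apply: IH => //; apply/leq_sizeP => j; rewrite leq_eqVlt => /orP[/eqP <-|]; last exact: a_hi.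
  exact: sa.
pose g := a`_N %/ h ^+ N.
set r := a - g *: zpow t.
have coef_r j : r`_j = if j == N then 0 else a`_j.
  rewrite coefB coefZ zpowE mulnC -def_N coefZ coefXn.
  by case: eqP => [->|_]; rewrite ?mulr1 ?divpK ?subrr // !mulr0 subr0.
have le_rN : (size r <= N)%N.
  apply/leq_sizeP => j le_Nj; rewrite coef_r; case: eqP => // /eqP neNj.
  by apply: a_hi; rewrite ltn_neqAle eq_sym neNj.
have hr : h_graded h r.
  apply/h_gradedB/h_gradedZ => // i.
  rewrite zpowE mulnC -def_N coefZ coefXn.
  by case: eqP => [->|_]; rewrite ?mulr1 ?mulr0 ?dvdp0.
have sr : p_sparse r by move=> j pNj; rewrite coef_r sa // if_same.
rewrite -[a](subrK (g *: zpow t)) -/r -(wmulCl g); apply: sg_add; first exact: IH.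
by apply: sg_mul; [apply: polyC_subalg_gen; left | exact: Fxz_zpow].
Qed.

Lemma CAhx_iff_Fxz a : in_CAhx h a <-> in_Fxz a.
Proof.
split; last exact: Fxz_CAhx.
by move/CAhx_iff_sparse=> [ha sa]; exact: CAhx_Fxz_size (leqnn _) ha sa.
Qed.

Lemma CAhx_iff_sum a : in_CAhx h a <->
  exists n (f : nat -> {poly F}), a = \sum_(i < n | (p %| i)%N) (f i * h ^+ i) *: 'X^i.
Proof.
rewrite CAhx_iff_sparse (@combination_iff _ (fun i => p %| i)%N (fun i => h ^+ i)
  (fun g i => g * h ^+ i)) //.
split=> [[ha sa] m | coefP]; first by split; [exact: sa | exact: ha].
by split=> m; case: (coefP m).
Qed.

Definition comm_x_coefs b :=
  forall m, ((p %| m.+1)%N -> b`_m = 0) /\ h ^+ m.+1 %| b`_m.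

Lemma comm_x_coefsP b : comm_x_coefs b <-> exists a, h_graded h a /\ b = - a^`().
Proof.
split=> [bP|[a [ha ->]] m]; last first.
  rewrite coefN coef_deriv; split=> [pm|].
    by rewrite (mulrn_pchar_dvd pchar_polyF) ?oppr0.
  by rewrite -mulr_natr -mulrN; apply: dvdp_mulr.
pose a := \poly_(i < (size b).+1)
  (if i is j.+1 then - (((j.+1)%:R : F)^-1 *: b`_j) else 0).
exists a; split=> [i|].
  rewrite coef_poly; case: ltnP => _; last exact: dvdp0.
  case: i => [|j]; first exact: dvdp0.
  by rewrite -scaleNr -mul_polyC; apply/dvdp_mull/(proj2 (bP j)).
apply/polyP=> m; rewrite coefN coef_deriv coef_poly ltnS.
case: ltnP => [lt_mb|le_bm]; last by rewrite mul0rn oppr0 nth_default.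
rewrite mulNrn opprK scalerMnl.
have [pm|pNm] := boolP (p %| m.+1)%N; first by rewrite (proj1 (bP m)) // scaler0.
by rewrite -mulr_natr mulVf ?scale1r // -(dvdn_pcharf charFp).
Qed.

Lemma comm_x_iff_sum b : in_comm h (wx F) b <->
  exists n (f : nat -> {poly F}),
    b = \sum_(i < n | ~~ (p %| i.+1)%N) (h * f i * h ^+ i) *: 'X^i.
Proof.
rewrite comm_x_iff -comm_x_coefsP.
rewrite (@combination_iff _ (fun i => ~~ (p %| i.+1))%N (fun i => h ^+ i.+1)
  (fun g i => h * g * h ^+ i)); last by move=> g i; rewrite exprS; ring.
split=> bP m; have [b0 hb] := bP m; split=> //; first by rewrite negbK; exact: b0.
by move/negPn; exact: b0.
Qed.

Lemma comm_x_coefs0 : comm_x_coefs 0.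
Proof. by move=> m; rewrite coef0 dvdp0. Qed.

Lemma comm_x_coefsD b c : comm_x_coefs b -> comm_x_coefs c -> comm_x_coefs (b + c).
Proof.
move=> bP cP m; have [b0 hb] := bP m; have [c0 hc] := cP m.
by rewrite coefD; split=> [pm|]; [rewrite b0 ?c0 ?addr0 | exact: dvdp_add].
Qed.

(* A block (h c) (g y^i) with c p-sparse, hence commuting with F[x]. *)
Lemma block_termE c g i : p_sparse c ->
  wmul (wmul h%:P c) (g *: 'X^i) = (h * g) *: (c * 'X^i).
Proof.
move=> sc; rewrite wmulCl -[g *: 'X^i](wmulCl g) -wmulA wmulZl wmul_sparseC //.
by rewrite !wmulZl wmul_Xnr scalerA mulrC.
Qed.

(* Each block h c h^i y^i, with c central and i < p - 1, lies in [x, A_h]: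
   its coefficient in degree m is nonzero only for m = i (mod p). *)
Lemma comm_x_coefs_block c i : in_CAhx h c -> (i < p.-1)%N ->
  comm_x_coefs (wmul (wmul h%:P c) (h ^+ i *: 'X^i)).
Proof.
move=> /CAhx_iff_sparse[hc sc] lt_ip m; rewrite block_termE // coefZ coefMXn.
case: ltnP => [|le_im]; first by rewrite mulr0 dvdp0.
split=> [pm|]; last first.
  have -> : h ^+ m.+1 = (h * h ^+ i) * h ^+ (m - i).
    by rewrite -exprS -exprD addSn subnKC.
  exact/dvdp_mul/hc.
rewrite sc ?mulr0 //; apply: contraL pm => pmi.
have -> : m.+1 = ((m - i) + i.+1)%N by rewrite addnS subnK.
rewrite dvdn_addr //; apply/negP => /(dvdn_leq (ltn0Sn _)).
by move: lt_ip (prime_gt0 prime_p); lia.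
Qed.

(* For m with m+1 not divisible by p, exactly one i < p - 1 satisfies
   i <= m and i = m (mod p), namely i = m mod p. *)
Lemma sum_residue (V : nmodType) (v : V) m : ~~ (p %| m.+1)%N ->
  \sum_(i < p.-1) (if (i <= m)%N && (p %| m - i)%N then v else 0) = v.
Proof.
move=> pNm; have p_gt0 := prime_gt0 prime_p.
have lt_mod : (m %% p < p.-1)%N.
  rewrite ltn_neqAle -ltnS prednK // ltn_pmod // andbT; apply: contra pNm => /eqP def_m.
  by rewrite /dvdn -addn1 -modnDml def_m addn1 prednK // modnn.
rewrite (bigD1 (Ordinal lt_mod)) //= leq_mod {1}(divn_eq m p) addnK dvdn_mull //.
rewrite big1 ?addr0 // => i ne_i; case: andP => // -[le_im /dvdnP[k def_mi]].
case/eqP: ne_i; apply: val_inj => /=.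
rewrite -(subnK le_im) def_mi modnMDl modn_small //.
exact: leq_trans (ltn_ord i) (leq_pred p).
Qed.

Section Blocks.
Hypothesis hnz : h != 0.

Definition x_block b i : weyl F :=
  \poly_(j < size b) (if (p %| j)%N then b`_(j + i) %/ h ^+ i.+1 else 0).

Lemma CAhx_x_block b i : comm_x_coefs b -> in_CAhx h (x_block b i).
Proof.
move=> bP; apply/CAhx_iff_sparse; split=> j; rewrite coef_poly; last first.
  by case: ltnP => // _ /negbTE->.
case: ltnP => _; last exact: dvdp0.
case: ifP => _; last exact: dvdp0.
have /dvdpP[q ->] := proj2 (bP (j + i)%N).
by rewrite -addnS exprD mulrA mulpK ?expf_neq0 //; exact: dvdp_mull (dvdpp _).
Qed.

Lemma coef_x_block_term b (i : nat) m : comm_x_coefs b ->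
  (wmul (wmul h%:P (x_block b i)) (h ^+ i *: 'X^i))`_m =
  if (i <= m)%N && (p %| m - i)%N then b`_m else 0.
Proof.
move=> bP; have [_ sc] := proj1 (CAhx_iff_sparse _) (CAhx_x_block i bP).
rewrite block_termE // coefZ coefMXn; case: ltnP => //= le_im; first by rewrite mulr0.
rewrite coef_poly; case: (ltnP (m - i) (size b)) => [_|le_b]; last first.
  by rewrite mulr0 nth_default ?if_same // (leq_trans le_b (leq_subr i m)).
case: ifP => _; last by rewrite mulr0.
rewrite subnK // -exprS mulrC divpK //.
by apply: dvdp_trans (dvdp_exp2l h _) (proj2 (bP m)); rewrite ltnS.
Qed.

Lemma comm_x_iff_blocks b : in_comm h (wx F) b <->
  exists c : nat -> weyl F, (forall i, in_CAhx h (c i)) /\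
    b = \sum_(i < p.-1) wmul (wmul h%:P (c i)) ((h ^+ i) *: 'X^i).
Proof.
rewrite comm_x_iff -comm_x_coefsP; split=> [bP|[c [cC ->]]]; last first.
  by apply: big_ind => [||i _]; [exact: comm_x_coefs0 | exact: comm_x_coefsD |
    exact: comm_x_coefs_block].
exists (x_block b); split=> [i|]; first exact: CAhx_x_block.
apply/polyP=> m; rewrite coef_sum.
under eq_bigr => i _ do rewrite coef_x_block_term //.
have [bm0|bmN0] := eqVneq b`_m 0; first by rewrite bm0 big1 // => i _; rewrite if_same.
rewrite sum_residue //; apply: contra bmN0 => pm; exact/eqP/(proj1 (bP m)).
Qed.

End Blocks.

Lemma deriv_expand_pchar g N : (size g <= N)%N ->
  g^`() = \sum_(j < N | ~~ (p %| j.+1)%N) (g^`())`_j *: 'X^j.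
Proof.
move=> le_gN; transitivity (\sum_(j < N) (g^`())`_j *: 'X^j).
  rewrite -poly_def; apply/polyP=> j; rewrite coef_poly coef_deriv.
  case: ltnP => // le_Nj; rewrite nth_default ?mul0rn //.
  exact: leq_trans le_gN (leqW le_Nj).
rewrite [RHS]big_mkcond; apply: eq_bigr => j _ /=; case: ifP => // /negbFE pj.
by rewrite coef_deriv (mulrn_pchar_dvd charFp) // scale0r.
Qed.

Lemma deriv_antiderivative_pchar (c : nat -> F) n :
  (\sum_(j < n | ~~ (p %| j.+1)%N) (c j / (j.+1)%:R) *: 'X^(j.+1))^`() =
  \sum_(j < n | ~~ (p %| j.+1)%N) c j *: 'X^j.
Proof.
rewrite raddf_sum; apply: eq_bigr => j pNj /=.
by rewrite derivZ derivXn -scaler_nat scalerA divfK // -(dvdn_pcharf charFp).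
Qed.

Lemma comm_yhat_iff_monomials b : in_comm h (yhat h) b <->
  exists n (c : nat -> nat -> F),
    b = \sum_(j < n | ~~ (p %| j.+1)%N) \sum_(k < n)
          wmul ((h * (c j k *: 'X^j))%:P) (wexp (yhat h) k).
Proof.
have regroup n (q : nat -> {poly F}) (c : nat -> nat -> F) k :
    (forall k, q k = \sum_(j < n | ~~ (p %| j.+1)%N) c j k *: 'X^j) ->
    \sum_(j < n | ~~ (p %| j.+1)%N) wmul ((h * (c j k *: 'X^j))%:P) (wexp (yhat h) k)
    = wmul ((q k * h)%:P) (wexp (yhat h) k).
  by move=> defq; rewrite -wmul_suml -(raddf_sum (@polyC _)) -mulr_sumr defq mulrC.
rewrite comm_yhat_iff_sum; split=> [[n [g ->]] | [n [c ->]]].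
  pose N := (n + \sum_(k < n) size (g k))%N.
  have le_nN : (n <= N)%N by rewrite leq_addr.
  have le_gN k : (k < n)%N -> (size (g k) <= N)%N.
    by move=> ltkn; rewrite /N (bigD1 (Ordinal ltkn)) //= addnCA leq_addr.
  pose q k := if (k < n)%N then (g k)^`() else 0.
  pose c j k := if (k < n)%N then ((g k)^`())`_j else 0.
  have defq k : q k = \sum_(j < N | ~~ (p %| j.+1)%N) c j k *: 'X^j.
    rewrite /q /c; case: ltnP => [/le_gN /deriv_expand_pchar //|_].
    by rewrite big1 // => j _; rewrite scale0r.
  exists N, c; rewrite exchange_big /=.
  under [RHS]eq_bigr => k _ do rewrite (regroup N q c k defq).
  rewrite (big_ord_widen N (fun k => wmul (((g k)^`() * h)%:P) (wexp (yhat h) k)) le_nN).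
  rewrite big_mkcond /=; apply: eq_bigr => k _; rewrite /q.
  by case: ltnP => // _; rewrite mul0r polyC0 wmul0l.
exists n, (fun k => \sum_(j < n | ~~ (p %| j.+1)%N) (c j k / (j.+1)%:R) *: 'X^(j.+1)).
rewrite exchange_big /=; apply: eq_bigr => k _.
exact: regroup (fun k => deriv_antiderivative_pchar (c^~ k) n).
Qed.

End CharacteristicP.

Unset Implicit Arguments.

Theorem lemma6p3 (F : fieldType) (h : {poly F}) (hnz : h != 0) :
  (* (i) characteristic 0 *)
  ([pchar F] =i pred0 ->
     forall a : weyl F, in_CAhx h a <-> exists f : {poly F}, a = f%:P)
  /\
  (* (ii) characteristic p > 0 *)
  (forall p : nat, p \in [pchar F] ->
     (* (a) *)
     (forall a : weyl F,
        (in_CAhx h a <->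
           subalg_gen (fun b => b = wx F \/ b = (h ^+ p) *: 'X^p) a)
        /\
        (in_CAhx h a <->
           exists (n : nat) (f : nat -> {poly F}),
             a = \sum_(i < n | (p %| i)%N) (f i * h ^+ i) *: 'X^i))
     /\
     (* (b) *)
     (forall b : weyl F,
        (in_comm h (wx F) b <->
           exists (n : nat) (f : nat -> {poly F}),
             b = \sum_(i < n | ~~ (p %| i.+1)%N) (h * f i * h ^+ i) *: 'X^i)
        /\
        (in_comm h (wx F) b <->
           exists c : nat -> weyl F,
             (forall i, in_CAhx h (c i)) /\
             b = \sum_(i < p.-1) wmul (wmul h%:P (c i)) ((h ^+ i) *: 'X^i)))
     /\
     (* (c) *)
     (forall b : weyl F,
        (in_comm h (yhat h) b <->
           exists (n : nat) (g : nat -> {poly F}),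
             b = \sum_(i < n) wmul (((g i)^`() * h)%:P) (wexp (yhat h) i))
        /\
        (in_comm h (yhat h) b <->
           exists (n : nat) (c : nat -> nat -> F),
             b = \sum_(j < n | ~~ (p %| j.+1)%N) \sum_(k < n)
                   wmul ((h * (c j k *: 'X^j))%:P) (wexp (yhat h) k)))).
Proof.
split; first exact: CAhx_char0.
move=> p charFp; split.
  by move=> a; split; [exact: CAhx_iff_Fxz | exact: CAhx_iff_sum].
split.
  by move=> b; split; [exact: comm_x_iff_sum | exact: comm_x_iff_blocks].
by move=> b; split; [exact: comm_yhat_iff_sum | exact: comm_yhat_iff_monomials].
Qed.
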